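(* Let $\Gamma$ be a finite simple graph and $g\in G(\Gamma)$. The following are equivalent: (i) $g$ is cyclically reduced; (ii) there is no geodesic decomposition $g=u^{-1}hu$ with $u,h\in G(\Gamma)$ and $u\ne1$; (iii) $|g^n|=n|g|$ for all $n\ge2$; (iv) $|g^n|=n|g|$ for some $n\ge 2$; (v) for every geodesic decomposition $g=g_1g_2$, the decomposition $g_2g_1$ is also geodesic (i.e. $|g_2g_1|=|g_2|+|g_1|$).
   Context: $G(\Gamma)=\langle v\in V(\Gamma)\mid [v_i,v_j]=1 \text{ if } \{v_i,v_j\}\notin E(\Gamma)\rangle$. $|g|$ is word length with respect to $V(\Gamma)$. A decomposition $g=g_1\cdots g_k$ is geodesic if $|g|=|g_1|+\cdots+|g_k|$. An element is cyclically reduced if it has minimum word length in its conjugacy class. *)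

From mathcomp Require Import all_boot.
From Stdlib Require Import Relation_Operators ClassicalDescription.
Set Implicit Arguments. Unset Strict Implicit. Unset Printing Implicit Defensive.

(* Group G(Gamma) = < V | [v_i,v_j] = 1 if {v_i,v_j} is NOT an edge >.
   Elements are represented by words over letters V * bool
   ((v,false) = v, (v,true) = v^-1); two words represent the same element
   iff they are related by the congruence generated by free cancellation
   and the defining commutations. *)
Section RAAG.
Variables (V : finType) (E : rel V).

Definition letter := (V * bool)%type.
Definition linv (a : letter) : letter := (a.1, ~~ a.2).
Definition winv (w : seq letter) : seq letter := rev (map linv w).

Inductive rstep : seq letter -> seq letter -> Prop :=
| rs_cancel (w1 w2 : seq letter) (a : letter) :
    rstep (w1 ++ [:: a; linv a] ++ w2) (w1 ++ w2)
| rs_comm (w1 w2 : seq letter) (a b : letter) :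
    ~~ E a.1 b.1 -> rstep (w1 ++ [:: a; b] ++ w2) (w1 ++ [:: b; a] ++ w2).

Definition gEq : seq letter -> seq letter -> Prop := clos_refl_sym_trans _ rstep.

Definition decP (P : Prop) : bool :=
  if excluded_middle_informative P then true else false.

Definition has_len (w : seq letter) : pred nat :=
  fun n => decP (exists w', gEq w w' /\ size w' = n).

Lemma has_len_ex (w : seq letter) : exists n, has_len w n.
Proof.
exists (size w); rewrite /has_len /decP.
case: excluded_middle_informative => // H; exfalso; apply: H.
by exists w; split => //; apply: rst_refl.
Qed.

Definition glen (w : seq letter) : nat := ex_minn (has_len_ex w).

Definition gpow (w : seq letter) (n : nat) : seq letter := flatten (nseq n w).

Definition cyc_reduced (g : seq letter) : Prop :=
  forall u, glen g <= glen (winv u ++ g ++ u).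

End RAAG.

(* Push the letters of a word one at a time onto the left of a reduced word,
   cancelling a letter a against the first letter that does not commute with it
   whenever that letter is a^-1.  Words that are equal in G(Gamma) yield normal
   forms with the same projections onto every pair of non-commuting (or equal)
   generators, hence of the same size, so |w| is the size of the normal form.

   If the normal form of g cannot be rearranged into c^-1 h c, then the powers of
   that normal form are still reduced, so |g^n| = n |g|; no conjugate u^-1 g u can
   then be shorter than g, since g^N = u (u^-1 g u)^N u^-1 would be shorter than
   N |g| once N > 2 |u|.  Otherwise g = c^-1 h c with |g| = |h| + 2, and this one
   decomposition violates each of (ii)-(v). *)

From Pilot Require Import Defs.
From mathcomp Require Import all_boot zify.
From Stdlib Require Import Relation_Operators ClassicalDescription.
Set Implicit Arguments. Unset Strict Implicit. Unset Printing Implicit Defensive.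

Section RAAG.
Variables (V : finType) (E : rel V).
Hypothesis Esym : symmetric E.
Local Notation letter := (letter V).
Local Notation gEq := (gEq E).
Local Notation glen := (glen E).
Local Notation cyc_reduced := (cyc_reduced E).

Lemma linvK : involutive (@linv V).
Proof. by case=> v b; rewrite /linv negbK. Qed.

Lemma linv_neq (a : letter) : linv a != a.
Proof. by case: a => v []; rewrite /linv xpair_eqE eqxx. Qed.

Lemma same_vertex_letter (a b : letter) : a.1 = b.1 -> b = a \/ b = linv a.
Proof. by case: a b => v x [w y] /= ->; rewrite /linv; case: x; case: y; auto. Qed.

Lemma winv_cat (w1 w2 : seq letter) : winv (w1 ++ w2) = winv w2 ++ winv w1.
Proof. by rewrite /winv map_cat rev_cat. Qed.

Lemma winvK : involutive (@winv V).
Proof. by move=> w; rewrite /winv map_rev revK -map_comp (eq_map linvK) map_id. Qed.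

Lemma gpowS (w : seq letter) n : gpow w n.+1 = w ++ gpow w n.
Proof. by []. Qed.

Lemma size_gpow (w : seq letter) n : size (gpow w n) = n * size w.
Proof. by elim: n => // n IH; rewrite gpowS size_cat IH mulSn. Qed.

Lemma gEq_refl w : gEq w w. Proof. exact: rst_refl. Qed.
Lemma gEq_sym w w' : gEq w w' -> gEq w' w. Proof. exact: rst_sym. Qed.
Lemma gEq_trans w1 w2 w3 : gEq w1 w2 -> gEq w2 w3 -> gEq w1 w3.
Proof. exact: rst_trans. Qed.
Lemma gEq_step w w' : rstep E w w' -> gEq w w'. Proof. exact: rst_step. Qed.

Lemma gEq_letterV (a : letter) : gEq [:: a; linv a] [::].
Proof. by apply: gEq_step; have := rs_cancel E [::] [::] a; rewrite cats0. Qed.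

Lemma gEq_Vletter (a : letter) : gEq [:: linv a; a] [::].
Proof. by have := gEq_letterV (linv a); rewrite linvK. Qed.

Lemma gEq_ctx p q w w' : gEq w w' -> gEq (p ++ w ++ q) (p ++ w' ++ q).
Proof.
elim=> [x y []|x|x y _|x y z _ IH1 _]; last 3 first.
- exact: gEq_refl.
- exact: gEq_sym.
- exact: gEq_trans.
- by move=> w1 w2 a; apply: gEq_step; have := rs_cancel E (p ++ w1) (w2 ++ q) a; rewrite -!catA.
- by move=> w1 w2 a b ab; apply: gEq_step; have := rs_comm (p ++ w1) (w2 ++ q) ab; rewrite -!catA.
Qed.

Lemma gEq_ctx_nil p q w : gEq w [::] -> gEq (p ++ w ++ q) (p ++ q).
Proof. exact: gEq_ctx. Qed.

Lemma gEq_cat a a' b b' : gEq a a' -> gEq b b' -> gEq (a ++ b) (a' ++ b').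
Proof.
move=> /(gEq_ctx [::] b) aa' /(gEq_ctx a' [::]); rewrite !cats0.
exact: gEq_trans aa'.
Qed.

Lemma gEq_catl p w w' : gEq w w' -> gEq (p ++ w) (p ++ w').
Proof. exact: gEq_cat (gEq_refl p). Qed.

Lemma gEq_catr q w w' : gEq w w' -> gEq (w ++ q) (w' ++ q).
Proof. by move/gEq_cat; apply; apply: gEq_refl. Qed.

Lemma gEq_catVw (u : seq letter) : gEq (winv u ++ u) [::].
Proof.
elim: u => [|x u IH]; first exact: gEq_refl.
rewrite [winv _]/winv /= rev_cons -cats1 -catA.
exact: gEq_trans (gEq_ctx_nil (winv u) u (gEq_Vletter x)) IH.
Qed.

Lemma gEq_catwV (u : seq letter) : gEq (u ++ winv u) [::].
Proof. by have := gEq_catVw (winv u); rewrite winvK. Qed.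

Lemma gEq_winv w w' : gEq w w' -> gEq (winv w) (winv w').
Proof.
elim=> [x y []|x|x y _|x y z _ IH1 _]; last 3 first.
- exact: gEq_refl.
- exact: gEq_sym.
- exact: gEq_trans.
- move=> w1 w2 a; rewrite !winv_cat -catA.
  by apply: gEq_ctx_nil; rewrite /winv /= linvK; apply: gEq_letterV.
- move=> w1 w2 a b ab; rewrite !winv_cat -!catA; apply: gEq_ctx.
  by apply: gEq_step; apply: (rs_comm [::] [::]); rewrite /= Esym.
Qed.

Lemma gEq_rev w w' : gEq w w' -> gEq (rev w) (rev w').
Proof.
elim=> [x y []|x|x y _|x y z _ IH1 _]; last 3 first.
- exact: gEq_refl.
- exact: gEq_sym.
- exact: gEq_trans.
- move=> w1 w2 a; rewrite !rev_cat -catA.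
  by apply: gEq_ctx_nil; apply: gEq_Vletter.
- move=> w1 w2 a b ab; rewrite !rev_cat -!catA; apply: gEq_ctx.
  by apply: gEq_step; apply: (rs_comm [::] [::]); rewrite Esym.
Qed.

Lemma gEq_gpow w w' n : gEq w w' -> gEq (gpow w n) (gpow w' n).
Proof. by move=> ww'; elim: n => [|n IH]; [apply: gEq_refl | apply: gEq_cat]. Qed.

Lemma gEq_conj_gpow (u g : seq letter) n :
  gEq (gpow (winv u ++ g ++ u) n) (winv u ++ gpow g n ++ u).
Proof.
elim: n => [|n IH]; first exact: gEq_sym (gEq_catVw u).
rewrite gpowS; apply: gEq_trans (gEq_catl _ IH) _.
rewrite gpowS -!catA; do 2 apply: gEq_catl.
by rewrite catA; apply: gEq_catr (gEq_catwV u).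
Qed.

Lemma gEq_unconj (u m : seq letter) : gEq (u ++ (winv u ++ m ++ u) ++ winv u) m.
Proof.
rewrite -!catA catA -[m in gEq _ m]cats0 -[m]/([::] ++ m).
by apply: gEq_cat (gEq_catwV u) (gEq_cat (gEq_refl m) (gEq_catwV u)).
Qed.

(** * Normal forms *)

Definition dep (u v : V) := E u v || (u == v).

Lemma dep_sym u v : dep u v = dep v u.
Proof. by rewrite /dep Esym eq_sym. Qed.

Lemma dep_refl u : dep u u.
Proof. by rewrite /dep eqxx orbT. Qed.

Definition dep_on (a : letter) : pred letter := fun z => dep a.1 z.1.

Fixpoint absorb (a : letter) (r : seq letter) : option (seq letter) :=
  if r is x :: r' then
    if dep a.1 x.1 then (if x == linv a then Some r' else None)
    else omap (cons x) (absorb a r')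
  else None.

Definition absorbs (a : letter) (r : seq letter) :=
  ohead (filter (dep_on a) r) == Some (linv a).

Lemma absorbE a r : isSome (absorb a r) = absorbs a r.
Proof.
rewrite /absorbs; elim: r => [|x r IH] //=; rewrite {1}/dep_on.
case: (dep a.1 x.1) => /=; last by rewrite -IH; case: absorb.
by case: (x =P linv a) => [->|/eqP nx]; rewrite ?eqxx // eqE /= (negbTE nx).
Qed.

Definition lmul (a : letter) (r : seq letter) :=
  if absorb a r is Some s then s else a :: r.

Fixpoint reduced (r : seq letter) :=
  if r is x :: r' then reduced r' && ~~ absorbs x r' else true.

Definition nf (w : seq letter) := foldr lmul [::] w.

Definition on_pair (u v : V) : pred letter := fun z => (z.1 == u) || (z.1 == v).
Definition proj u v (r : seq letter) := filter (on_pair u v) r.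
Definition proj_eq (r r' : seq letter) := forall u v, dep u v -> proj u v r = proj u v r'.

Lemma proj_eq_refl r : proj_eq r r. Proof. by []. Qed.
Lemma proj_eq_sym r r' : proj_eq r r' -> proj_eq r' r.
Proof. by move=> rr' u v uv; rewrite rr'. Qed.
Lemma proj_eq_trans r1 r2 r3 : proj_eq r1 r2 -> proj_eq r2 r3 -> proj_eq r1 r3.
Proof. by move=> r12 r23 u v uv; rewrite r12 ?r23. Qed.

Lemma on_pair_dep u v a x : dep u v -> on_pair u v a -> on_pair u v x -> dep a.1 x.1.
Proof. by move=> uv /orP[]/eqP-> /orP[]/eqP->; rewrite ?dep_refl // dep_sym. Qed.

Lemma on_pair_self u a : on_pair u a.1 a.
Proof. by rewrite /on_pair eqxx orbT. Qed.

Lemma on_pair_indep u (c d : letter) :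
  ~~ dep c.1 d.1 -> dep u d.1 -> on_pair u d.1 c = false.
Proof.
move=> cd ud; apply/negP=> uc.
by move: (on_pair_dep ud uc (on_pair_self u d)); rewrite (negbTE cd).
Qed.

Lemma on_pair_linv u v a : on_pair u v (linv a) = on_pair u v a.
Proof. by []. Qed.

Lemma on_pair_dep_on u a : dep u a.1 -> subpred (on_pair u a.1) (dep_on a).
Proof. by move=> ua z /orP[]/eqP za; rewrite /dep_on za ?dep_refl // dep_sym. Qed.

Lemma filter_subpred (P Q : pred letter) r :
  subpred P Q -> filter P (filter Q r) = filter P r.
Proof.
move=> PQ; rewrite -filter_predI; apply: eq_filter => z /=.
by case: (boolP (P z)) => // /PQ.
Qed.

Lemma ohead_proj a r y t u : filter (dep_on a) r = y :: t -> dep u a.1 ->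
  on_pair u a.1 y -> ohead (proj u a.1 r) = Some y.
Proof. by move=> ar ua uy; rewrite /proj -(filter_subpred _ (on_pair_dep_on ua)) ar /= uy. Qed.

Lemma absorbs_filter a r : absorbs a r -> exists t, filter (dep_on a) r = linv a :: t.
Proof. by rewrite /absorbs; case: filter => [|y t] //= /eqP [->]; exists t. Qed.

Lemma absorbs_proj a r r' : (forall u, dep u a.1 -> proj u a.1 r = proj u a.1 r') ->
  absorbs a r = absorbs a r'.
Proof.
suff imp r1 r2 : (forall u, dep u a.1 -> proj u a.1 r1 = proj u a.1 r2) ->
    absorbs a r1 -> absorbs a r2.
  by move=> rr'; apply/idP/idP; apply: imp => // u ua; rewrite rr'.
move=> r12 /absorbs_filter [t r1a].
have head1 u : dep u a.1 -> ohead (proj u a.1 r2) = Some (linv a).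
  by move=> ua; rewrite -r12 // (ohead_proj r1a ua) // on_pair_linv on_pair_self.
case r2a: (filter (dep_on a) r2) => [|y t'].
  have := head1 _ (dep_refl a.1).
  by rewrite /proj -(filter_subpred _ (on_pair_dep_on (dep_refl _))) r2a.
have ya : dep y.1 a.1.
  by move: (mem_head y t'); rewrite -r2a mem_filter /dep_on dep_sym => /andP[].
move: (head1 _ ya); rewrite (ohead_proj r2a ya) ?/on_pair ?eqxx // => -[ey].
by rewrite /absorbs r2a ey.
Qed.

Lemma proj_absorb a r s u v : dep u v -> absorb a r = Some s ->
  proj u v s = if on_pair u v a then behead (proj u v r) else proj u v r.
Proof.
move=> uv; elim: r s => [|x r IH] s //=.
case ax: (dep a.1 x.1).
  by case: eqP => // -> [<-]; rewrite /proj /= on_pair_linv; case: on_pair.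
case ar: (absorb a r) => [s'|] //= [<-]; rewrite /proj /= -!/(proj u v _) (IH s') //.
case Hx: (on_pair u v x); case Ha: (on_pair u v a) => //.
by move: (on_pair_dep uv Ha Hx); rewrite ax.
Qed.

Lemma proj_lmul u v a r : dep u v -> proj u v (lmul a r) =
  if on_pair u v a then (if absorbs a r then behead (proj u v r) else a :: proj u v r)
  else proj u v r.
Proof.
move=> uv; rewrite /lmul -absorbE; case ar: absorb => [s|] /=.
  by rewrite (proj_absorb uv ar); case: on_pair.
by rewrite /proj /=; case: on_pair.
Qed.

Lemma proj_eq_lmul a r r' : proj_eq r r' -> proj_eq (lmul a r) (lmul a r').
Proof.
move=> rr' u v uv; rewrite !proj_lmul // rr' //.
by rewrite (absorbs_proj (r' := r')) // => w wa; rewrite rr'.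
Qed.

Lemma absorbs_proj_cons a r u v : dep u v -> on_pair u v a -> absorbs a r ->
  proj u v r = linv a :: behead (proj u v r).
Proof.
move=> uv ua /absorbs_filter [t ra].
have sub : subpred (on_pair u v) (dep_on a) by move=> z; apply: on_pair_dep uv ua.
by rewrite /proj -(filter_subpred _ sub) ra /= on_pair_linv ua.
Qed.

Lemma absorb_reduced_inv a r s : reduced r -> absorb a r = Some s -> absorb (linv a) s = None.
Proof.
elim: r s => [|x r IH] s //= /andP[rr xr].
case ax: (dep a.1 x.1).
  by case: eqP => // ex [<-]; move: xr; rewrite ex -absorbE; case: absorb.
case ar: (absorb a r) => [s'|] //= [<-] /=; rewrite ax.
by rewrite (IH s').
Qed.

Lemma proj_eq_lmulV a r : reduced r -> proj_eq (lmul (linv a) (lmul a r)) r.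
Proof.
move=> rr; case ar: (absorbs a r); last first.
  rewrite /lmul -absorbE in ar *; case: absorb ar => // _ /=.
  by rewrite dep_refl linvK eqxx.
move=> u v uv; rewrite !proj_lmul //.
have -> : absorbs (linv a) (lmul a r) = false.
  move: ar; rewrite /lmul -!absorbE; case ar: absorb => [s|] // _.
  by rewrite (absorb_reduced_inv rr ar).
rewrite ar on_pair_linv; case ua: (on_pair u v a) => //.
by rewrite -(absorbs_proj_cons uv ua ar).
Qed.

Lemma reduced_lmul a r : reduced r -> reduced (lmul a r).
Proof.
rewrite /lmul; case ar: absorb => [s|]; last by move=> rr /=; rewrite rr -absorbE ar.
elim: r s ar => [|x r IH] s //=.
case ax: (dep a.1 x.1); first by case: eqP => // _ [<-] /andP[].
case ar: (absorb a r) => [s'|] //= [<-] /andP[rr xr] /=.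
rewrite (IH s') //= (absorbs_proj (r' := r)) // => u ux.
by rewrite (proj_absorb ux ar) on_pair_indep ?ax.
Qed.

Lemma proj_eq_lmulC a b r : reduced r -> ~~ E a.1 b.1 ->
  proj_eq (lmul b (lmul a r)) (lmul a (lmul b r)).
Proof.
move=> rr nab; case: (eqVneq a.1 b.1) => [eab|neab].
  case: (same_vertex_letter eab) => ->; first exact: proj_eq_refl.
  apply: proj_eq_trans (proj_eq_lmulV _ rr) _.
  by apply: proj_eq_sym; have := proj_eq_lmulV (linv a) rr; rewrite linvK.
have {neab} {}nab : ~~ dep a.1 b.1 by rewrite /dep negb_or nab neab.
have absb : absorbs b (lmul a r) = absorbs b r.
  by apply: absorbs_proj => u ub; rewrite proj_lmul // on_pair_indep.
have absa : absorbs a (lmul b r) = absorbs a r.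
  by apply: absorbs_proj => u ua; rewrite proj_lmul // on_pair_indep // dep_sym.
move=> u v uv; rewrite !proj_lmul // absa absb.
case ua: (on_pair u v a); case ub: (on_pair u v b) => //.
by move: (on_pair_dep uv ua ub); rewrite (negbTE nab).
Qed.

Lemma reduced_nf w : reduced (nf w).
Proof. by elim: w => //= x w; apply: reduced_lmul. Qed.

Lemma proj_eq_foldr r r' w : proj_eq r r' -> proj_eq (foldr lmul r w) (foldr lmul r' w).
Proof. by elim: w => //= x w IH rr'; apply: proj_eq_lmul; apply: IH. Qed.

Lemma nf_cat w1 w2 : nf (w1 ++ w2) = foldr lmul (nf w2) w1.
Proof. by rewrite /nf foldr_cat. Qed.

Lemma proj_eq_nf w w' : gEq w w' -> proj_eq (nf w) (nf w').
Proof.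
elim=> [x y []|x|x y _|x y z _ IH1 _]; last 3 first.
- exact: proj_eq_refl.
- exact: proj_eq_sym.
- exact: proj_eq_trans.
- move=> w1 w2 a; rewrite !nf_cat; apply: proj_eq_foldr => /=.
  by have := proj_eq_lmulV (linv a) (reduced_nf w2); rewrite linvK.
- move=> w1 w2 a b ab; rewrite !nf_cat; apply: proj_eq_foldr => /=.
  by apply: proj_eq_lmulC; rewrite ?reduced_nf // Esym.
Qed.

Lemma proj_eq_size r r' : proj_eq r r' -> size r = size r'.
Proof.
move=> rr'; apply: perm_size; apply/allP => x _; apply/eqP.
have count_proj s : count_mem x s = count_mem x (proj x.1 x.1 s).
  by rewrite /proj count_filter; apply: eq_count => z /=; case: eqP => // ->; rewrite /on_pair eqxx.
by rewrite count_proj (count_proj r') rr' ?dep_refl.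
Qed.

Lemma absorb_gEq a r s : absorb a r = Some s -> gEq s (a :: r).
Proof.
elim: r s => [|x r IH] s //=.
case ax: (dep a.1 x.1).
  by case: eqP => // -> [<-]; apply: gEq_sym; apply: (gEq_ctx_nil [::] r (gEq_letterV a)).
case ar: (absorb a r) => [s'|] //= [<-].
apply: gEq_trans (gEq_catl [:: x] (IH s' ar)) _.
apply: gEq_step; apply: (rs_comm [::] r).
by apply: contraFN ax => xa; rewrite /dep Esym xa.
Qed.

Lemma nf_gEq w : gEq (nf w) w.
Proof.
elim: w => [|x w IH] /=; first exact: gEq_refl.
apply: gEq_trans (gEq_catl [:: x] IH); rewrite /lmul.
by case ar: absorb => [s|]; [apply: absorb_gEq | apply: gEq_refl].
Qed.

Lemma size_absorb a r s : absorb a r = Some s -> (size s).+1 = size r.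
Proof.
elim: r s => [|x r IH] s //=.
case: (dep a.1 x.1); first by case: eqP => // _ [<-].
by case ar: (absorb a r) => [s'|] //= [<-] /=; rewrite (IH s').
Qed.

Lemma size_nf w : size (nf w) <= size w.
Proof.
elim: w => //= x w IH; apply: (@leq_trans (size (nf w)).+1) => //; rewrite /lmul.
by case ar: absorb => [s|] //; rewrite -(size_absorb ar) leqW.
Qed.

Lemma nf_reduced w : reduced w -> nf w = w.
Proof.
elim: w => //= x w IH /andP[rw xw]; rewrite IH // /lmul.
by move: xw; rewrite -absorbE; case: absorb.
Qed.

Lemma has_lenP w n : has_len E w n <-> exists w', gEq w w' /\ size w' = n.
Proof.
rewrite /has_len /Defs.decP.
by case: excluded_middle_informative => wn; split=> // /wn.
Qed.

Lemma glen_nf w : glen w = size (nf w).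
Proof.
rewrite /glen; case: ex_minnP => n /has_lenP [w' [ww' <-]] min_n.
have nf_le : size (nf w) <= size w' by rewrite (proj_eq_size (proj_eq_nf ww')) size_nf.
apply/eqP; rewrite eqn_leq nf_le andbT.
by apply: min_n; apply/has_lenP; exists (nf w); split=> //; apply/gEq_sym/nf_gEq.
Qed.

Lemma glen_eq w w' : gEq w w' -> glen w = glen w'.
Proof. by move=> ww'; rewrite !glen_nf (proj_eq_size (proj_eq_nf ww')). Qed.

Lemma glen_size w : glen w <= size w.
Proof. by rewrite glen_nf size_nf. Qed.

Lemma glen_reduced w : reduced w -> glen w = size w.
Proof. by move=> rw; rewrite glen_nf nf_reduced. Qed.

Lemma glen_eq0 w : glen w = 0 -> gEq w [::].
Proof. by rewrite glen_nf => /size0nil w0; rewrite -w0; apply/gEq_sym/nf_gEq. Qed.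

Lemma glen1 (c : letter) : glen [:: c] = 1.
Proof. by rewrite glen_reduced. Qed.

Lemma glen_cat w1 w2 : glen (w1 ++ w2) <= glen w1 + glen w2.
Proof.
rewrite (glen_eq (gEq_cat (gEq_sym (nf_gEq w1)) (gEq_sym (nf_gEq w2)))).
by rewrite (glen_nf w1) (glen_nf w2) -size_cat glen_size.
Qed.

Lemma glen_cat3 w1 w2 w3 : glen (w1 ++ w2 ++ w3) <= glen w1 + glen w2 + glen w3.
Proof. by rewrite -addnA; apply: leq_trans (glen_cat _ _) _; rewrite leq_add2l glen_cat. Qed.

Lemma glen_winv w : glen (winv w) = glen w.
Proof.
suff le u : glen (winv u) <= glen u by apply/eqP; rewrite eqn_leq le -{1}(winvK w) le.
rewrite (glen_eq (gEq_winv (gEq_sym (nf_gEq u)))) (glen_nf u).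
by apply: leq_trans (glen_size _) _; rewrite size_rev size_map.
Qed.

Lemma glen_gpow w n : glen (gpow w n) <= n * glen w.
Proof.
elim: n => [|n IH]; first by rewrite glen_nf.
by rewrite gpowS mulSn; apply: leq_trans (glen_cat _ _) _; rewrite leq_add2l.
Qed.

(** * Cyclically reduced elements *)

(* [w] can be rearranged by commutations into c^-1 h c. *)
Definition peelable (c : letter) (w : seq letter) := absorbs c w && absorbs (linv c) (rev w).

Definition unpeelable (w : seq letter) := [forall c, ~~ peelable c w].

Lemma absorbs_cat x p q :
  absorbs x (p ++ q) = if has (dep_on x) p then absorbs x p else absorbs x q.
Proof. by rewrite /absorbs filter_cat has_filter; case: filter. Qed.

Lemma reduced_cat p q : reduced p -> reduced q ->
    (forall pre x p', p = pre ++ x :: p' -> ~~ has (dep_on x) p' -> ~~ absorbs x q) ->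
  reduced (p ++ q).
Proof.
elim: p => [|y p IH] //= /andP[rp yp] rq seam.
rewrite IH //; last by move=> pre x p' e; apply: (seam (y :: pre)); rewrite e.
rewrite absorbs_cat; case: ifP => // yp'.
by rewrite andTb; apply: (seam [::] y p) => //; rewrite yp'.
Qed.

Lemma reduced_gpow g n : reduced g -> unpeelable g -> reduced (gpow g n).
Proof.
move=> rg /forallP ug; elim: n => [|n IH] //; rewrite gpowS.
apply: reduced_cat => // pre x p' e; rewrite has_filter negbK => /eqP x_last.
case: n {IH} => // n; rewrite gpowS absorbs_cat ifT; last first.
  by apply/hasP; exists x; rewrite ?e ?mem_cat ?mem_head ?orbT // /dep_on dep_refl.
apply: contra (ug x) => xg; rewrite /peelable xg /absorbs filter_rev e filter_cat /=.
by rewrite x_last /dep_on linvK dep_refl rev_cat.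
Qed.

Lemma glen_gpow_unpeelable g n : unpeelable (nf g) -> glen (gpow g n) = n * glen g.
Proof.
move=> ug; rewrite (glen_eq (gEq_gpow n (gEq_sym (nf_gEq g)))).
by rewrite glen_reduced ?reduced_gpow ?reduced_nf // size_gpow glen_nf.
Qed.

Lemma unpeelable_cyc_reduced g : unpeelable (nf g) -> cyc_reduced g.
Proof.
move=> ug u; rewrite leqNgt; apply/negP => short.
set N := (2 * glen u).+1.
have e : gEq (gpow g N) (u ++ gpow (winv u ++ g ++ u) N ++ winv u).
  apply: gEq_sym; apply: (gEq_trans _ (gEq_unconj u (gpow g N))).
  by apply/gEq_catl/gEq_catr/gEq_conj_gpow.
have := glen_cat3 u (gpow (winv u ++ g ++ u) N) (winv u).
rewrite -(glen_eq e) glen_gpow_unpeelable // glen_winv //.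
by have := glen_gpow (winv u ++ g ++ u) N; rewrite /N; nia.
Qed.

Lemma filter_absorb a r s : absorb a r = Some s ->
  filter (dep_on a) s = behead (filter (dep_on a) r).
Proof.
elim: r s => [|x r IH] s //=.
case ax: (dep a.1 x.1); first by case: eqP => // -> [<-] /=; rewrite {2}/dep_on dep_refl.
have xa : dep_on a x = false := ax.
by case ar: (absorb a r) => [s'|] //= [<-] /=; rewrite xa; apply: IH.
Qed.

Lemma peelable_split c w : peelable c w ->
  exists h, gEq w (linv c :: h ++ [:: c]) /\ size h + 2 = size w.
Proof.
case/andP=> cw; move: (cw); rewrite -absorbE; case wc: absorb => [s|] // _.
have [t wt] := absorbs_filter cw.
have -> : absorbs (linv c) (rev w) = absorbs (linv c) (rev s).
  rewrite /absorbs !filter_rev linvK (filter_absorb wc) /dep_on wt /=.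
  case/lastP: t {wt} => [|t y]; last by rewrite rev_cons rev_rcons.
  by case: eqP => // -[/eqP]; rewrite (negbTE (linv_neq c)).
rewrite -absorbE; case sc: absorb => [t'|] // _.
have ws : gEq w (linv c :: s).
  apply: gEq_sym; apply: gEq_trans (gEq_catl [:: linv c] (absorb_gEq wc)) _.
  exact: (gEq_ctx_nil [::] w (gEq_Vletter c)).
have st : gEq s (rev t' ++ [:: c]).
  have := gEq_rev (absorb_gEq sc); rewrite rev_cons revK => /(gEq_catr [:: c]) /gEq_sym.
  apply: gEq_trans; rewrite -cats1 -catA -{1}[s]cats0.
  exact/gEq_catl/gEq_sym/gEq_Vletter.
exists (rev t'); split; first exact: gEq_trans ws (gEq_catl [:: linv c] st).
by rewrite size_rev -(size_absorb wc) -(size_rev s) -(size_absorb sc) addn2.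
Qed.

Lemma peelable_nf_split g c : peelable c (nf g) ->
  exists h, gEq g (linv c :: h ++ [:: c]) /\ glen g = glen h + 2.
Proof.
case/peelable_split=> h [gh sh]; have {}gh := gEq_trans (gEq_sym (nf_gEq g)) gh.
exists h; split=> //; have := glen_size h.
by have := glen_cat3 [:: linv c] h [:: c]; rewrite -(glen_eq gh) !glen1 glen_nf -sh; lia.
Qed.

Lemma cyc_reducedP g : reflect (cyc_reduced g) (unpeelable (nf g)).
Proof.
apply: (iffP idP) => [|cg]; first exact: unpeelable_cyc_reduced.
apply/forallP=> c; apply/negP=> /peelable_nf_split [h [gh lg]].
have e : gEq (winv [:: linv c] ++ g ++ [:: linv c]) h.
  rewrite /winv /= linvK; apply: gEq_trans (gEq_unconj [:: c] h).
  exact: (gEq_catl [:: c] (gEq_catr [:: linv c] gh)).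
by have := cg [:: linv c]; rewrite (glen_eq e) lg; lia.
Qed.

Lemma cyc_reduced_by_split g (P : Prop) :
    (forall c h, gEq g (linv c :: h ++ [:: c]) -> glen g = glen h + 2 -> ~ P) ->
  P -> cyc_reduced g.
Proof.
move=> nP p; apply/cyc_reducedP/forallP=> c; apply/negP=> /peelable_nf_split [h [gh lg]].
exact: nP gh lg p.
Qed.

Lemma cyc_reduced_gpow g n : cyc_reduced g -> glen (gpow g n) = n * glen g.
Proof. by move/cyc_reducedP; apply: glen_gpow_unpeelable. Qed.

Lemma cyc_reduced_geodesic_conj g u h : cyc_reduced g -> gEq g (winv u ++ h ++ u) ->
  glen g = glen (winv u) + glen h + glen u -> gEq u [::].
Proof.
move=> cg gu lg; apply: glen_eq0; have := cg (winv u).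
rewrite winvK (glen_eq (gEq_trans (gEq_catl u (gEq_catr _ gu)) (gEq_unconj u h))).
by rewrite lg glen_winv; lia.
Qed.

Lemma cyc_reduced_rotate g g1 g2 : cyc_reduced g -> gEq g (g1 ++ g2) ->
  glen g = glen g1 + glen g2 -> glen (g2 ++ g1) = glen g2 + glen g1.
Proof.
move=> cg gg lg; apply/eqP; rewrite eqn_leq glen_cat /=.
have e : gEq (winv g1 ++ g ++ g1) (g2 ++ g1).
  apply: gEq_trans (gEq_catl _ (gEq_catr _ gg)) _; rewrite -!catA.
  by have := gEq_ctx_nil [::] (g2 ++ g1) (gEq_catVw g1); rewrite /= -!catA.
by have := cg g1; rewrite (glen_eq e) lg addnC.
Qed.

Lemma glen_gpow_split g c h n : gEq g (linv c :: h ++ [:: c]) -> glen g = glen h + 2 ->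
  glen (gpow g n) + 2 * n <= n * glen g + 2.
Proof.
move=> gh lg; have e := gEq_trans (gEq_gpow n gh) (gEq_conj_gpow [:: c] h n).
have := glen_cat3 (winv [:: c]) (gpow h n) [:: c]; rewrite -(glen_eq e) glen_winv glen1.
by have := glen_gpow h n; rewrite lg; nia.
Qed.

Lemma glen_rotate_split g c h : gEq g (linv c :: h ++ [:: c]) -> glen g = glen h + 2 ->
  glen g = glen [:: linv c] + glen (h ++ [:: c]) /\
  glen ((h ++ [:: c]) ++ [:: linv c]) < glen (h ++ [:: c]) + glen [:: linv c].
Proof.
move=> gh lg; have := glen_cat [:: linv c] (h ++ [:: c]); rewrite -(glen_eq gh).
have := glen_cat h [:: c]; rewrite -catA (glen_eq (gEq_ctx_nil h [::] (gEq_letterV c))) cats0.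
by rewrite !glen1; lia.
Qed.

End RAAG.

Theorem lemma2p1 (V : finType) (E : rel V)
  (Esym : symmetric E) (Eirr : irreflexive E) (g : seq (letter V)) :
  [/\ (cyc_reduced E g <->
        ~ (exists u h : seq (letter V),
              gEq E g (winv u ++ h ++ u) /\
              glen E g = glen E (winv u) + glen E h + glen E u /\
              ~ gEq E u [::])),
      (cyc_reduced E g <->
        forall n, 2 <= n -> glen E (gpow g n) = n * glen E g),
      (cyc_reduced E g <->
        exists2 n, 2 <= n & glen E (gpow g n) = n * glen E g) &
      (cyc_reduced E g <->
        forall g1 g2 : seq (letter V),
          gEq E g (g1 ++ g2) -> glen E g = glen E g1 + glen E g2 ->
          glen E (g2 ++ g1) = glen E g2 + glen E g1)].
Proof.
have cr_of_pow : (exists2 n, 2 <= n & glen E (gpow g n) = n * glen E g) -> cyc_reduced E g.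
  apply: (cyc_reduced_by_split Esym) => c h gh lg [n n2 gn].
  by have := glen_gpow_split Esym n gh lg; rewrite gn; lia.
split; split.
- move=> cg [u [h [gu [lg u1]]]]; exact/u1/(cyc_reduced_geodesic_conj Esym cg gu lg).
- apply: (cyc_reduced_by_split Esym) => c h gh lg; apply; exists [:: c], h.
  rewrite /winv /= !(glen1 Esym) lg; split=> //; split; first by lia.
  by move/(glen_eq Esym); rewrite (glen1 Esym) glen_nf.
- by move=> cg n _; apply: cyc_reduced_gpow.
- by move=> pow; apply: cr_of_pow; exists 2 => //; apply: pow.
- by move=> cg; exists 2 => //; apply: cyc_reduced_gpow.
- exact: cr_of_pow.
- by move=> cg g1 g2; apply: cyc_reduced_rotate.
- apply: (cyc_reduced_by_split Esym) => c h gh lg rot.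
  have [lg' short] := glen_rotate_split Esym gh lg.
  by move: short; rewrite (rot [:: linv c] _ gh lg') ltnn.
Qed.
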